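(* Let $n,d\ge 1$, let $X\in\mathbb{R}^{d\times n}$ have columns $x_1,\dots,x_n\in\mathbb{R}^d$, let $y=(y_1,\dots,y_n)^T\in\{-1,+1\}^n$ contain at least one entry equal to $+1$ and at least one entry equal to $-1$, and set $Z=X\,\mathrm{diag}(y)$. Let $q>0$, $C>0$, and let $e\in\mathbb{R}^n$ have all entries positive with $\|e\|_\infty=1$. Let $\kappa=\frac{q+1}{q}q^{\frac{1}{q+1}}$ and let $\alpha^*$ be an optimal solution of the problem $$\min_{\alpha\in\mathbb{R}^n}\Big\{\|Z\alpha\|-\kappa\sum_{i=1}^n\alpha_i^{\frac{q}{q+1}}\;\Big|\;0\le\alpha\le Ce,\ \langle y,\alpha\rangle=0\Big\}.$$ Then there exists $\delta>0$ such that $\alpha^*_i\ge\delta$ for all $i=1,\dots,n$.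
   Context: This problem is (up to sign) the Lagrangian dual of the primal problem $\min\{\sum_{i=1}^n\theta_q(r_i)+C\langle e,\xi\rangle \mid Z^Tw+\beta y+\xi-r=0,\ \|w\|\le1,\ \xi\ge0\}$, where $\theta_q(t)=t^{-q}$ for $t>0$ and $+\infty$ otherwise. $\|\cdot\|$ is the Euclidean norm; inequalities between vectors are componentwise. *)

From HB Require Import structures.
From mathcomp Require Import all_boot all_order all_algebra.
From mathcomp Require Import all_classical all_reals all_analysis.
Set Implicit Arguments. Unset Strict Implicit. Unset Printing Implicit Defensive.
Import Order.TTheory GRing.Theory Num.Theory.
Local Open Scope ring_scope.

Definition eucl_norm (R : realType) (m : nat) (v : 'cV[R]_m) : R :=
  Num.sqrt (\sum_(i < m) v i 0 ^+ 2).

Definition linf_norm (R : realType) (n : nat) (e : 'I_n -> R) : R :=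
  \big[Num.max/0]_(i < n) `|e i|.

Definition Zmat (R : realType) (d n : nat) (X : 'M[R]_(d, n)) (y : 'I_n -> R)
  : 'M[R]_(d, n) := X *m diag_mx (\row_i y i).

Definition kappa (R : realType) (q : R) : R :=
  (q + 1) / q * powR q (1 / (q + 1)).

Definition dual_obj (R : realType) (d n : nat) (X : 'M[R]_(d, n))
  (y : 'I_n -> R) (q : R) (a : 'I_n -> R) : R :=
  eucl_norm (Zmat X y *m \col_i a i)
  - kappa q * \sum_(i < n) powR (a i) (q / (q + 1)).

Definition dual_feasible (R : realType) (n : nat) (y : 'I_n -> R) (C : R)
  (e : 'I_n -> R) (a : 'I_n -> R) : Prop :=
  (forall i, 0 <= a i /\ a i <= C * e i) /\ \sum_(i < n) y i * a i = 0.

Definition dual_optimal (R : realType) (d n : nat) (X : 'M[R]_(d, n))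
  (y : 'I_n -> R) (q C : R) (e : 'I_n -> R) (a : 'I_n -> R) : Prop :=
  dual_feasible y C e a /\
  forall b, dual_feasible y C e b -> dual_obj X y q a <= dual_obj X y q b.

From HB Require Import structures.
From mathcomp Require Import all_boot all_order all_algebra.
From mathcomp Require Import all_classical all_reals all_analysis.
From mathcomp Require Import ring lra.

Set Implicit Arguments.
Unset Strict Implicit.
Unset Printing Implicit Defensive.
Import Order.TTheory GRing.Theory Num.Theory.
Local Open Scope ring_scope.

(* If some [a k] vanished at an optimum, move along a direction that raises
   [a k] by [t] and keeps [<y, a> = 0] and the box constraints: either raise an
   opposite-label coordinate lying below its bound, or lower a positive
   same-label one; one of the two exists because [<y, a> = 0] and both labels
   occur.  The norm term and the partner coordinate change the objective by
   [O(t)], while coordinate [k] lowers it by [kappa q * t ^ p] with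
   [p = q / (q + 1) < 1], so the objective strictly decreases for small [t]. *)

Section EuclNorm.
Variables (R : realType) (m : nat).
Implicit Types u w : 'cV[R]_m.

Lemma eucl_norm_ge0 u : 0 <= eucl_norm u.
Proof. exact: sqrtr_ge0. Qed.

Lemma sqr_eucl_norm u : eucl_norm u ^+ 2 = \sum_i u i 0 ^+ 2.
Proof. by rewrite sqr_sqrtr // sumr_ge0 // => i _; rewrite sqr_ge0. Qed.

Lemma abs_coord_le_eucl_norm u i : `|u i 0| <= eucl_norm u.
Proof.
rewrite -sqrtr_sqr; apply: ler_wsqrtr.
by rewrite (bigD1 i) //= lerDl sumr_ge0 // => j _; rewrite sqr_ge0.
Qed.

Lemma dot_le_eucl_norm_l1 u w :
  \sum_i u i 0 * w i 0 <= eucl_norm u * \sum_i `|w i 0|.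
Proof.
rewrite mulr_sumr; apply: ler_sum => i _.
rewrite (le_trans (ler_norm _)) // normrM ler_wpM2r //.
exact: abs_coord_le_eucl_norm.
Qed.

Lemma eucl_norm_le_l1 w : eucl_norm w <= \sum_i `|w i 0|.
Proof.
have [->|Nw_gt0] := eqVneq (eucl_norm w) 0; first by rewrite sumr_ge0.
have := dot_le_eucl_norm_l1 w w.
under eq_bigr do rewrite -expr2.
rewrite -sqr_eucl_norm expr2 ler_pM2l //.
by rewrite lt_neqAle eq_sym Nw_gt0 eucl_norm_ge0.
Qed.

Lemma eucl_norm_addZ_le u w (t : R) : 0 <= t ->
  eucl_norm (u + t *: w) <= eucl_norm u + t * \sum_i `|w i 0|.
Proof.
move=> t_ge0; set A := \sum_i `|w i 0|.
have A_ge0 : 0 <= A by rewrite sumr_ge0.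
rewrite -(@ler_pXn2r _ 2) ?nnegrE ?addr_ge0 ?mulr_ge0 ?eucl_norm_ge0 //.
have -> : eucl_norm (u + t *: w) ^+ 2 =
    eucl_norm u ^+ 2 + 2 * t * \sum_i u i 0 * w i 0 + t ^+ 2 * eucl_norm w ^+ 2.
  rewrite !sqr_eucl_norm mulr_sumr mulr_sumr -!big_split /=.
  by apply: eq_bigr => i _; rewrite !mxE; ring.
have uw : t * \sum_i u i 0 * w i 0 <= t * (eucl_norm u * A).
  exact: ler_wpM2l (dot_le_eucl_norm_l1 u w).
have ww : eucl_norm w ^+ 2 <= A ^+ 2.
  by rewrite ler_pXn2r ?nnegrE ?eucl_norm_ge0 // eucl_norm_le_l1.
have := ler_wpM2l (sqr_ge0 t) ww.
rewrite sqrrD; lra.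
Qed.

End EuclNorm.

Section Powers.
Variable R : realType.

Lemma exists_lt_powR (p t1 K : R) : 0 < p -> p < 1 -> 0 < t1 -> 0 <= K ->
  exists t, [/\ 0 < t, t <= t1 & t * K < t `^ p].
Proof.
move=> p_gt0 p_lt1 t1_gt0 K_ge0.
set c := Num.min (Num.min t1 1) (K + 1)^-1.
have c_gt0 : 0 < c by rewrite !lt_min t1_gt0 ltr01 invr_gt0 ltr_wpDl.
have c_le1 : c <= 1 by rewrite !ge_min lexx orbT.
have cK : c * K < 1.
  rewrite (@le_lt_trans _ _ ((K + 1)^-1 * K)) ?ler_wpM2r ?ge_min ?lexx ?orbT //.
  by rewrite ltr_pdivrMl ?ltr_wpDl // mulr1 ltrDl.
set r := (1 - p)^-1.
have r_ge1 : 1 <= r by rewrite invf_ge1 ?subr_gt0 // gerBl ltW.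
(* [r p + 1 = r] gives [(c ^ r) ^ p = c ^ r / c], and [c K < 1] concludes. *)
exists (c `^ r); split; first exact: powR_gt0.
  have c_le_t1 : c <= t1 by rewrite !ge_min lexx.
  by rewrite (le_trans _ c_le_t1) // ge1r_powR ?c_gt0.
rewrite -powRrM; have -> : c `^ r = c `^ (r * p) * c.
  rewrite -{3}(powRr1 (ltW c_gt0)) -powRD ?(gt_eqF c_gt0) ?implybT //.
  by congr (_ `^ _); rewrite /r; field; rewrite subr_eq0 gt_eqF.
rewrite -mulrA -[X in _ < X]mulr1 ltr_pM2l //.
exact: powR_gt0.
Qed.

Lemma powR_chord_le (p a x : R) : 0 < p -> p <= 1 -> 0 < a -> 0 <= x <= a ->
  x / a * a `^ p <= x `^ p.
Proof.
move=> p_gt0 p_le1 a_gt0 /andP[x_ge0 x_le_a].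
have [->|x_neq0] := eqVneq x 0; first by rewrite !mul0r powR_ge0.
have x_gt0 : 0 < x by rewrite lt_neqAle eq_sym x_neq0.
rewrite [in leRHS](_ : x = x / a * a); last by rewrite divfK ?gt_eqF.
rewrite powRM ?divr_ge0 ?(ltW a_gt0) // ler_pM2r ?powR_gt0 //.
by rewrite ger1_powR // divr_gt0 //= ler_pdivrMr // mul1r.
Qed.

End Powers.

Lemma sum_mul_delta (R : pzRingType) (n : nat) (f : 'I_n -> R) (k : 'I_n) :
  \sum_i f i * (i == k)%:R = f k.
Proof.
rewrite (bigD1 k) //= eqxx mulr1 big1 ?addr0 // => i /negbTE ->.
by rewrite mulr0.
Qed.

Section PairDirection.
Variables (R : realType) (n : nat) (k j : 'I_n) (s : R).
Hypothesis j_neq_k : j != k.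

Definition pair_dir : 'I_n -> R := fun i => (i == k)%:R + s * (i == j)%:R.

Lemma pair_dir_k : pair_dir k = 1.
Proof. by rewrite /pair_dir eqxx eq_sym (negbTE j_neq_k) mulr0 addr0. Qed.

Lemma pair_dir_j : pair_dir j = s.
Proof. by rewrite /pair_dir eqxx (negbTE j_neq_k) mulr1 add0r. Qed.

Lemma pair_dir_other i : i != k -> i != j -> pair_dir i = 0.
Proof. by move=> /negbTE ik /negbTE ij; rewrite /pair_dir ik ij mulr0 addr0. Qed.

Lemma sum_mul_pair_dir (f : 'I_n -> R) :
  \sum_i f i * pair_dir i = f k + s * f j.
Proof.
under eq_bigr do rewrite /pair_dir mulrDr mulrCA.
by rewrite big_split /= -mulr_sumr !sum_mul_delta.
Qed.

Lemma sum_powR_addZ_pair (a : 'I_n -> R) (p t : R) : p != 0 -> a k = 0 ->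
  \sum_i (a i + t * pair_dir i) `^ p =
  \sum_i a i `^ p + t `^ p + ((a j + t * s) `^ p - a j `^ p).
Proof.
move=> p_neq0 ak0.
rewrite -addrA -[LHS](subrK (\sum_i a i `^ p)) addrC -sumrB; congr (_ + _).
rewrite (bigD1 k) // (bigD1 j) // big1 => [|i /andP[ik ij]]; last first.
  by rewrite pair_dir_other // mulr0 addr0 subrr.
by rewrite pair_dir_k pair_dir_j ak0 powR0 // add0r mulr1 subr0 /= addr0.
Qed.

Lemma dual_feasible_addZ_pair (y : 'I_n -> R) (C : R) (e a : 'I_n -> R) (t : R) :
  dual_feasible y C e a -> a k = 0 -> y k + s * y j = 0 ->
  0 <= t <= C * e k -> 0 <= a j + t * s <= C * e j ->
  dual_feasible y C e (fun i => a i + t * pair_dir i).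
Proof.
move=> [a_bnd a_bal] ak0 y_bal /andP[t_ge0 t_le] /andP[bj_ge0 bj_le]; split.
  move=> i; have [->|ik] := eqVneq i k; first by rewrite ak0 pair_dir_k add0r mulr1.
  have [->|ij] := eqVneq i j; first by rewrite pair_dir_j.
  by rewrite pair_dir_other // mulr0 addr0.
under eq_bigr do rewrite mulrDr mulrCA.
by rewrite big_split /= a_bal -mulr_sumr sum_mul_pair_dir y_bal mulr0 addr0.
Qed.

End PairDirection.

Lemma exists_balancing_index (R : realType) (n : nat) (y : 'I_n -> R) (C : R)
    (e a : 'I_n -> R) :
  (forall i, y i = 1 \/ y i = -1) -> (exists i, y i = 1) -> (exists j, y j = -1) ->
  (forall i, 0 < C * e i) -> dual_feasible y C e a -> forall k,
  (exists j, y j = - y k /\ a j < C * e j) \/ (exists j, y j = y k /\ 0 < a j).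
Proof.
move=> y_sign [i1 yi1] [i2 yi2] Ce_gt0 [a_bnd a_bal] k.
have [|no_free] := pselect (exists j, y j = - y k /\ a j < C * e j); first by left.
have [|no_pos] := pselect (exists j, y j = y k /\ 0 < a j); first by right.
exfalso.
have y_cases i : y i = y k \/ y i = - y k.
  by case: (y_sign i) => ->; case: (y_sign k) => ->; rewrite ?opprK; [left|right|right|left].
have yk2 : y k * y k = 1 by case: (y_sign k) => ->; rewrite ?mulrNN mulr1.
have [j0 yj0] : exists j0, y j0 = - y k.
  by case: (y_sign k) => ->; [exists i2 | exists i1]; rewrite ?opprK.
have full i : y i = - y k -> a i = C * e i.
  move=> yi; apply/eqP; rewrite eq_le (a_bnd i).2 /= leNgt.
  by apply/negP => lt; apply: no_free; exists i.
have empty i : y i = y k -> a i = 0.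
  move=> yi; apply/eqP; rewrite eq_le (a_bnd i).1 andbT leNgt.
  by apply/negP => gt; apply: no_pos; exists i.
have : y k * \sum_i y i * a i < 0.
  rewrite mulr_sumr (bigD1 j0) //= yj0 full // mulrA mulrN yk2 mulN1r.
  have : \sum_(i | i != j0) y k * (y i * a i) <= 0.
    apply: sumr_le0 => i _; case: (y_cases i) => yi; first by rewrite empty ?mulr0.
    by rewrite yi mulrA mulrN yk2 mulN1r oppr_le0 (a_bnd i).1.
  have := Ce_gt0 j0; lra.
by rewrite a_bal mulr0 ltxx.
Qed.

Section DualProblem.
Variables (R : realType) (d n : nat) (X : 'M[R]_(d, n)) (y : 'I_n -> R).
Variables (q C : R) (e : 'I_n -> R).
Hypothesis q_gt0 : 0 < q.

Local Notation p := (q / (q + 1)).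

Let q1_gt0 : 0 < q + 1. Proof. by rewrite ltr_wpDr // ltW. Qed.
Let p_gt0 : 0 < p. Proof. exact: divr_gt0. Qed.
Let p_lt1 : p < 1. Proof. by rewrite ltr_pdivrMr // mul1r ltrDl. Qed.

Lemma kappa_gt0 : 0 < kappa q.
Proof. by rewrite /kappa mulr_gt0 ?divr_gt0 ?powR_gt0. Qed.

Lemma dual_obj_addZ_le (a v : 'I_n -> R) (t : R) : 0 <= t ->
  dual_obj X y q (fun i => a i + t * v i) <=
  dual_obj X y q a + t * \sum_i `|(Zmat X y *m \col_i v i) i 0|
  - kappa q * (\sum_i (a i + t * v i) `^ p - \sum_i a i `^ p).
Proof.
move=> t_ge0; rewrite /dual_obj.
have -> : \col_i (a i + t * v i) = \col_i a i + t *: \col_i v i.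
  by apply/matrixP => i i0; rewrite !mxE.
rewrite mulmxDr -scalemxAr.
have := eucl_norm_addZ_le (Zmat X y *m \col_i a i) (Zmat X y *m \col_i v i) t_ge0.
lra.
Qed.

Lemma optimal_no_powR_gain (a v : 'I_n -> R) (t1 M : R) :
  dual_optimal X y q C e a -> 0 < t1 -> 0 <= M ->
  (forall t, 0 < t -> t <= t1 -> dual_feasible y C e (fun i => a i + t * v i)) ->
  (forall t, 0 < t -> t <= t1 ->
     \sum_i a i `^ p + (t `^ p - t * M) <= \sum_i (a i + t * v i) `^ p) ->
  False.
Proof.
move=> [_ a_min] t1_gt0 M_ge0 feas gain.
set K := \sum_i `|(Zmat X y *m \col_i v i) i 0|.
have K_ge0 : 0 <= K by rewrite sumr_ge0.
have kappa_ge0 := ltW kappa_gt0.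
have [t [t_gt0 t_le_t1 t_small]] :=
  exists_lt_powR p_gt0 p_lt1 t1_gt0 (addr_ge0 (divr_ge0 K_ge0 kappa_ge0) M_ge0).
have := a_min _ (feas t t_gt0 t_le_t1).
have := dual_obj_addZ_le a v (ltW t_gt0); rewrite -/K.
have := ler_wpM2l kappa_ge0 (gain t t_gt0 t_le_t1).
have := t_small; rewrite -(ltr_pM2l kappa_gt0).
have -> : kappa q * (t * (K / kappa q + M)) = t * K + kappa q * (t * M).
  by field; rewrite gt_eqF // kappa_gt0.
lra.
Qed.

Lemma optimal_no_free_opposite (a : 'I_n -> R) (k j : 'I_n) :
  dual_optimal X y q C e a -> a k = 0 -> 0 < C * e k -> j != k ->
  y k + y j = 0 -> a j < C * e j -> False.
Proof.
move=> a_opt ak0 Cek_gt0 jk y_bal aj_lt.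
have [[a_bnd _] _] := a_opt; have aj_ge0 := (a_bnd j).1.
apply: (@optimal_no_powR_gain a (pair_dir k j 1)
          (Num.min (C * e k) (C * e j - a j)) 0 a_opt) => //.
- by rewrite lt_min Cek_gt0 subr_gt0.
- move=> t t_gt0; rewrite le_min => /andP[t_le_k t_le_j].
  apply: dual_feasible_addZ_pair => //; first exact: a_opt.1.
  - by rewrite mul1r.
  - by rewrite ltW.
  - by rewrite mulr1; apply/andP; split; lra.
- move=> t t_gt0 _; rewrite sum_powR_addZ_pair ?(gt_eqF p_gt0) // mulr1 mulr0 subr0.
  have : a j `^ p <= (a j + t) `^ p.
    by apply: ge0_ler_powR; rewrite ?nnegrE ?addr_ge0 ?lerDl ?(ltW p_gt0) ?(ltW t_gt0).
  lra.
Qed.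

Lemma optimal_no_positive_same (a : 'I_n -> R) (k j : 'I_n) :
  dual_optimal X y q C e a -> a k = 0 -> 0 < C * e k ->
  y j = y k -> 0 < a j -> False.
Proof.
move=> a_opt ak0 Cek_gt0 yj_yk aj_gt0.
have [[a_bnd _] _] := a_opt.
have jk : j != k by apply: contraTneq aj_gt0 => ->; rewrite ak0 ltxx.
apply: (@optimal_no_powR_gain a (pair_dir k j (-1))
          (Num.min (C * e k) (a j)) (a j `^ p / a j) a_opt) => //.
- by rewrite lt_min Cek_gt0.
- by rewrite divr_ge0 ?powR_ge0 ?ltW.
- move=> t t_gt0; rewrite le_min => /andP[t_le_k t_le_j].
  apply: dual_feasible_addZ_pair => //; first exact: a_opt.1.
  - by rewrite yj_yk mulN1r subrr.
  - by rewrite ltW.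
  - by rewrite mulrN1 subr_ge0 t_le_j (le_trans _ (a_bnd j).2) // gerBl ltW.
- move=> t t_gt0; rewrite le_min => /andP[_ t_le_j].
  rewrite sum_powR_addZ_pair ?(gt_eqF p_gt0) // mulrN1.
  have := powR_chord_le p_gt0 (ltW p_lt1) aj_gt0 (x := a j - t).
  rewrite subr_ge0 t_le_j gerBl ltW // => /(_ isT).
  have -> : (a j - t) / a j * a j `^ p = a j `^ p - t * (a j `^ p / a j).
    by field; rewrite gt_eqF.
  lra.
Qed.

Lemma dual_optimal_gt0 (a : 'I_n -> R) :
  (forall i, y i = 1 \/ y i = -1) -> (exists i, y i = 1) -> (exists j, y j = -1) ->
  0 < C -> (forall i, 0 < e i) ->
  dual_optimal X y q C e a -> forall k, 0 < a k.
Proof.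
move=> y_sign y_pos y_neg C_gt0 e_gt0 a_opt k.
have Ce_gt0 i : 0 < C * e i by rewrite mulr_gt0.
rewrite lt_neqAle (a_opt.1.1 k).1 andbT eq_sym; apply/eqP => ak0.
have [[j [yj aj_lt]]|[j [yj aj_gt0]]] :=
  exists_balancing_index y_sign y_pos y_neg Ce_gt0 a_opt.1 k.
- have jk : j != k.
    by apply/eqP => jk; move: yj; rewrite jk; case: (y_sign k) => ->; lra.
  by apply: (optimal_no_free_opposite a_opt ak0 (Ce_gt0 k) jk _ aj_lt); rewrite yj subrr.
- exact: (optimal_no_positive_same a_opt ak0 (Ce_gt0 k) yj aj_gt0).
Qed.

End DualProblem.

Theorem proposition2 (R : realType) (n d : nat) (X : 'M[R]_(d, n))
  (y : 'I_n -> R) (q C : R) (e : 'I_n -> R) (astar : 'I_n -> R) :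
  (0 < n)%N -> (0 < d)%N ->
  (forall i, y i = 1 \/ y i = -1) ->
  (exists i, y i = 1) -> (exists j, y j = -1) ->
  0 < q -> 0 < C ->
  (forall i, 0 < e i) -> linf_norm e = 1 ->
  dual_optimal X y q C e astar ->
  exists delta : R, 0 < delta /\ forall i, delta <= astar i.
Proof.
move=> _ _ y_sign y_pos y_neg q_gt0 C_gt0 e_gt0 _ a_opt.
have a_gt0 := dual_optimal_gt0 q_gt0 y_sign y_pos y_neg C_gt0 e_gt0 a_opt.
exists (\big[Num.min/1]_i astar i); split; last by move=> i; exact: bigmin_le.
by apply: lt_bigmin => // i _; exact: a_gt0.
Qed.
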